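(* Let $V$ be a vector space over a commutative field $K$, and let $m$ be a product on the tensor coalgebra $T(V)$ such that $(T(V),m,\eta,\Delta,\varepsilon)$ is a bialgebra (its unit is then $1\in V^{\otimes0}$). Define $S:T(V)\to T(V)$ by $S(1)=1$ and, for $n\ge1$ and $p_1,\dots,p_n\in V$, $$S(p_1\top\cdots\top p_n)=-\sum_{c\subseteq\{1,\dots,n-1\}}(-1)^{\mathrm{card}(c)}(p_1\top\cdots\top p_n)_c.$$ Then $S$ is an antipode for $(T(V),m,\eta,\Delta,\varepsilon)$.
   Context: $T(V)=\bigoplus_{n\ge0}V^{\otimes n}$, with $v_1\top\cdots\top v_n$ denoting $v_1\otimes\cdots\otimes v_n\in V^{\otimes n}$ and $1$ the generator of $V^{\otimes0}=K$, is the tensor coalgebra with coproduct $\Delta(v_1\top\cdots\top v_n)=\sum_{k=0}^n(v_1\top\cdots\top v_k)\otimes(v_{k+1}\top\cdots\top v_n)$ and counit $\varepsilon(1)=1$, $\varepsilon(V^{\otimes n})=0$ for $n\ge1$. For $c=\{j_1<\cdots<j_r\}\subseteq\{1,\dots,n-1\}$, $(p_1\top\cdots\top p_n)_c$ is obtained by replacing the $j$-th symbol $\top$ (counted from the left) by the product $m$ for each $j\in c$, i.e. $(p_1\top\cdots\top p_n)_c=(p_1\top\cdots\top p_{j_1})\,(p_{j_1+1}\top\cdots\top p_{j_2})\cdots(p_{j_r+1}\top\cdots\top p_n)$, products taken with $m$. *)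

From HB Require Import structures.
From mathcomp Require Import all_boot all_order all_algebra.
From mathcomp Require Import finmap.
From mathcomp Require Import monalg.
Set Implicit Arguments. Unset Strict Implicit. Unset Printing Implicit Defensive.
Import Order.TTheory GRing.Theory Num.Theory.
Local Open Scope ring_scope.

Section TensorCoalgebra.
Variables (K : fieldType) (I : choiceType).

(* V: the K-vector space with basis I (every vector space is of this form). *)
Definition Vsp := {malg K[I]}.
(* T(V) = (+)_n V^{(x)n}: basis = words over I; the word [:: i1;..;in]
   stands for i1 T ... T in. *)
Definition TV := {malg K[seq I]}.
(* T(V) (x) T(V): basis = pairs of words. *)
Definition TT := {malg K[(seq I * seq I)%type]}.

Definition mlift (A : choiceType) (W : lmodType K) (f : A -> W)
  (x : {malg K[A]}) : W := \sum_(a <- msupp x) x@_a *: f a.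

(* the generator 1 of V^{(x)0} = K *)
Definition tone : TV := << [::] >>.

Definition tens2 (x y : TV) : TT :=
  mlift (fun a => mlift (fun b => (<< (a, b) >> : TT)) y) x.

Definition coprod (x : TV) : TT :=
  mlift (fun w : seq I =>
           \sum_(k < (size w).+1) (<< (take k w, drop k w) >> : TT)) x.

Definition counit (x : TV) : K := x@_[::].

(* p1 T p2 T ... T pn for vectors pi in V *)
Definition vtens (ps : seq Vsp) : TV :=
  foldr (fun (p : Vsp) (t : TV) =>
           mlift (fun i : I => mlift (fun w : seq I => (<< i :: w >> : TV)) t) p)
        tone ps.

Definition mTT (m : TV -> TV -> TV) (z w : TT) : TT :=
  mlift (fun ab : seq I * seq I =>
    mlift (fun cd : seq I * seq I =>
      tens2 (m << ab.1 >> << cd.1 >>) (m << ab.2 >> << cd.2 >>)) w) z.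

(* (T(V), m, eta, Delta, eps) is a bialgebra, where eta(k) = k *: u.
   Coassociativity and counitality of (Delta, eps) hold by construction. *)
Definition is_bialgebra (m : TV -> TV -> TV) (u : TV) : Prop :=
  (forall (a : K) (x y z : TV), m (a *: x + y) z = a *: m x z + m y z) /\
  (forall (a : K) (x y z : TV), m z (a *: x + y) = a *: m z x + m z y) /\
  (forall x y z : TV, m (m x y) z = m x (m y z)) /\
  (forall x : TV, m u x = x /\ m x u = x) /\
  (forall x y : TV, coprod (m x y) = mTT m (coprod x) (coprod y)) /\
  coprod u = tens2 u u /\
  (forall x y : TV, counit (m x y) = counit x * counit y) /\
  counit u = 1.

Fixpoint mprod1 (m : TV -> TV -> TV) (x : TV) (xs : seq TV) : TV :=
  if xs is y :: xs' then m x (mprod1 m y xs') else x.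

(* (p1 T ... T pn)_c, where c is a subset of {1,..,n-1}, encoded as a
   subset of 'I_(n-1) via j |-> j+1: the j-th symbol T (from the left)
   is replaced by the product m for every j in c. *)
Definition cut_bounds (n : nat) (c : {set 'I_n.-1}) : seq nat :=
  0%N :: rcons [seq (val j).+1 | j <- enum c] n.

Definition pieces (ps : seq Vsp) (c : {set 'I_(size ps).-1}) : seq (seq Vsp) :=
  let b := cut_bounds c in
  [seq drop ab.1 (take ab.2 ps) | ab <- zip b (behead b)].

Definition cutprod (m : TV -> TV -> TV) (ps : seq Vsp)
  (c : {set 'I_(size ps).-1}) : TV :=
  let t := [seq vtens q | q <- pieces c] in mprod1 m (head 0 t) (behead t).

Definition is_antipode (m : TV -> TV -> TV) (u : TV) (S : TV -> TV) : Prop :=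
  forall x : TV,
    mlift (fun ab : seq I * seq I => m (S << ab.1 >>) << ab.2 >>) (coprod x)
      = counit x *: u
 /\ mlift (fun ab : seq I * seq I => m << ab.1 >> (S << ab.2 >>)) (coprod x)
      = counit x *: u.

End TensorCoalgebra.

From HB Require Import structures.
From mathcomp Require Import all_boot all_order all_algebra.
From mathcomp Require Import finmap.
From mathcomp Require Import monalg.
Set Implicit Arguments. Unset Strict Implicit. Unset Printing Implicit Defensive.
Import GRing.Theory.
Local Open Scope ring_scope.

(* The unit u is grouplike with counit 1, and the only such element of T(V) is
   the empty word 1: otherwise the support of u would contain words w, ww, wwww,
   ... of unbounded length. Both antipode identities are linear in x, so it
   suffices to check them on a word w = p1 ... pn with n >= 1, where they read
   sum_k S(p1 ... pk) (p(k+1) ... pn) = 0 and its mirror image. Let F(w) be the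
   alternating sum over the subsets c, so that S = -F on nonempty words.
   Splitting the subsets according to whether they contain the last (resp. the
   first) cut position gives F(w) = w - sum_(0<k<n) F(p1 ... pk) (p(k+1) ... pn)
   (resp. the mirror recursion), which is exactly the required identity. *)

Section LinearExtension.
Variables (K : fieldType) (A : choiceType).

Lemma mlift_supp_sub (W : lmodType K) (f : A -> W) (x : {malg K[A]}) (d : {fset A}) :
  (msupp x `<=` d)%fset -> mlift f x = \sum_(a <- d) x@_a *: f a.
Proof.
move=> le; rewrite /mlift [LHS](big_fset_incl _ le) => //= a _ /mcoeff_outdom ->.
by rewrite scale0r.
Qed.

Lemma mlift_is_linear (W : lmodType K) (f : A -> W) : linear (mlift f).
Proof.
move=> c x y; pose d := (msupp x `|` msupp y `|` msupp (c *: x + y))%fset.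
rewrite (@mlift_supp_sub _ _ (c *: x + y) d) ?fsubsetUr //.
rewrite (@mlift_supp_sub _ _ x d); last by rewrite /d -fsetUA fsubsetUl.
rewrite (@mlift_supp_sub _ _ y d); last by rewrite /d -fsetUA fsubsetU // fsubsetUl orbT.
rewrite scaler_sumr -big_split /=; apply: eq_bigr => a _.
by rewrite mcoeffD mcoeffZ scalerDl scalerA.
Qed.

HB.instance Definition _ (W : lmodType K) (f : A -> W) :=
  GRing.isLinear.Build K {malg K[A]} W *:%R (mlift f) (mlift_is_linear f).

Lemma mliftU (W : lmodType K) (f : A -> W) (a : A) : mlift f << a >> = f a.
Proof. by rewrite (mlift_supp_sub _ msuppU_le) big_seq_fset1 mcoeffUU scale1r. Qed.

Lemma mcoeff_mlift (B : choiceType) (f : A -> {malg K[B]}) (x : {malg K[A]}) b :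
  (mlift f x)@_b = \sum_(a <- msupp x) x@_a * (f a)@_b.
Proof. by rewrite /mlift raddf_sum; apply: eq_bigr => a _; apply: mcoeffZ. Qed.

Lemma sum_mcoeff_indicator (x : {malg K[A]}) a0 :
  \sum_(a <- msupp x) x@_a * (a == a0)%:R = x@_a0.
Proof.
case: msuppP => [a0x|a0x].
  rewrite (big_fsetD1 a0) //= eqxx mulr1 big1_fset ?addr0 // => a.
  by rewrite in_fsetD1 => /andP[/negbTE -> _] _; rewrite mulr0.
rewrite big1_fset // => a ax _; case: eqP ax => [->|_]; last by rewrite mulr0.
by rewrite (negbTE a0x).
Qed.

End LinearExtension.

Definition vals N (c : {set 'I_N}) : seq nat := [seq nat_of_ord j | j <- enum c].

Section SortedElements.
Variable N : nat.
Implicit Type c : {set 'I_N}.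

Lemma vals_sorted c : sorted ltn (vals c).
Proof.
apply: (subseq_sorted ltn_trans _ (iota_ltn_sorted 0 N)).
by rewrite -val_enum_ord /vals map_subseq // enumT filter_subseq.
Qed.

Lemma mem_vals c (j : 'I_N) : ((j : nat) \in vals c) = (j \in c).
Proof. by rewrite (mem_map val_inj) mem_enum. Qed.

Lemma vals_lt c : all (gtn N) (vals c).
Proof. by apply/allP => _ /mapP[j _ ->]; apply: ltn_ord. Qed.

Lemma size_vals c : size (vals c) = #|c|.
Proof. by rewrite size_map cardE. Qed.

Lemma vals_eq c L : sorted ltn L -> all (gtn N) L ->
  (forall j : 'I_N, ((j : nat) \in L) = (j \in c)) -> vals c = L.
Proof.
move=> sortL ltL memL; apply: (irr_sorted_eq ltn_trans ltnn (vals_sorted c) sortL) => i.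
have [ltiN|leNi] := ltnP i N; first by rewrite -[i]/(val (Ordinal ltiN)) mem_vals memL.
by apply/idP/idP => [/(allP (vals_lt c))|/(allP ltL)] /=; rewrite ltnNge leNi.
Qed.

End SortedElements.

Definition set_lift N (p : 'I_N.+1) (b : bool) (c : {set 'I_N}) : {set 'I_N.+1} :=
  (if b then [set p] else set0) :|: lift p @: c.

Section SetLift.
Variables (N : nat) (p : 'I_N.+1).

Lemma mem_set_lift b c k :
  (k \in set_lift p b c) = if unlift p k is Some j then j \in c else b.
Proof.
rewrite in_setU; case: unliftP => [j ->|->].
  rewrite (mem_imset _ _ (@lift_inj _ p)).
  by case: b; rewrite ?in_set0 ?in_set1 // eq_sym (negbTE (neq_lift _ _)).
case: b; rewrite ?in_set0 ?in_set1 ?eqxx //=.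
by apply/imsetP => -[j _ /eqP]; rewrite (negbTE (neq_lift _ _)).
Qed.

Lemma big_set_lift (V : zmodType) (F : {set 'I_N.+1} -> V) :
  \sum_(c : {set 'I_N.+1}) F c =
  \sum_(c : {set 'I_N}) (F (set_lift p false c) + F (set_lift p true c)).
Proof.
have bij_lift : bijective (fun bc => set_lift p bc.1 bc.2).
  exists (fun c : {set 'I_N.+1} => (p \in c, [set j : 'I_N | lift p j \in c])).
    case=> b c; rewrite /= mem_set_lift unlift_none; congr pair.
    by apply/setP => j; rewrite inE mem_set_lift liftK.
  move=> c; apply/setP => k; rewrite mem_set_lift.
  by case: unliftP => [j ->|->]; rewrite ?inE.
rewrite (reindex _ (onW_bij _ bij_lift)) /=.
rewrite -(pair_bigA _ (fun b c => F (set_lift p b c))) big_bool /= -big_split /=.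
by apply: eq_bigr => c _; rewrite addrC.
Qed.

End SetLift.

Lemma vals_set_lift_max N b (c : {set 'I_N}) :
  vals (set_lift ord_max b c) = if b then rcons (vals c) N else vals c.
Proof.
apply: vals_eq.
- case: b; last exact: vals_sorted.
  have := vals_sorted c; have := vals_lt c.
  case: (vals c) => [|h t] // /allP lt_ht /= sort_ht.
  by rewrite rcons_path sort_ht; apply: lt_ht; apply: mem_last.
- have ltc : all (gtn N.+1) (vals c) by apply: sub_all (vals_lt c) => i /ltnW.
  by case: b; rewrite ?all_rcons /= ltc ?ltnSn.
move=> k; rewrite mem_set_lift; case: unliftP => [j|] ->.
  rewrite -[val (lift _ j)]/(bump N j) /bump leqNgt ltn_ord add0n.
  by case: b; rewrite ?mem_rcons ?in_cons ?ltn_eqF ?mem_vals.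
case: b; rewrite /= ?mem_rcons ?in_cons ?eqxx //.
by apply/negP => /(allP (vals_lt c)); rewrite /= ltnn.
Qed.

Lemma vals_set_lift0 N b (c : {set 'I_N}) :
  vals (set_lift ord0 b c) = if b then 0%N :: map succn (vals c) else map succn (vals c).
Proof.
have sortS : sorted ltn (map succn (vals c)).
  by rewrite sorted_map; apply: sub_sorted (vals_sorted c) => x y /=; rewrite ltnS.
have ltS : all (gtn N.+1) (map succn (vals c)) by rewrite all_map; apply: vals_lt.
apply: vals_eq.
- case: b => //=; rewrite (path_sortedE ltn_trans) sortS andbT.
  by apply/allP => _ /mapP[i _ ->].
- by case: b; rewrite //= ltS.
move=> k; rewrite mem_set_lift; case: unliftP => [j|] ->.
  rewrite -[val (lift _ j)]/(bump 0 j) /bump add1n.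
  by case: b; rewrite ?in_cons /= (mem_map succn_inj) mem_vals.
by case: b; rewrite /= ?in_cons //; apply/negP => /mapP[].
Qed.

Section CutProducts.
Variables (R : pzRingType) (M : lmodType R) (mul : M -> M -> M).
Hypotheses (mulA : associative mul)
  (mulDl : left_distributive mul +%R) (mulDr : right_distributive mul +%R).

Lemma mul_0l z : mul 0 z = 0.
Proof. by apply: (addrI (mul 0 z)); rewrite -mulDl !addr0. Qed.

Lemma mul_0r z : mul z 0 = 0.
Proof. by apply: (addrI (mul z 0)); rewrite -mulDr !addr0. Qed.

Lemma mul_Nl x z : mul (- x) z = - mul x z.
Proof. by apply: (addrI (mul x z)); rewrite -mulDl !subrr mul_0l. Qed.

Lemma mul_Nr x z : mul z (- x) = - mul z x.
Proof. by apply: (addrI (mul z x)); rewrite -mulDr !subrr mul_0r. Qed.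

Lemma mul_suml (J : Type) (r : seq J) (P : pred J) (F : J -> M) z :
  mul (\sum_(j <- r | P j) F j) z = \sum_(j <- r | P j) mul (F j) z.
Proof. exact: (big_morph (mul^~ z) (fun x y => mulDl x y z) (mul_0l z)). Qed.

Lemma mul_sumr (J : Type) (r : seq J) (P : pred J) (F : J -> M) z :
  mul z (\sum_(j <- r | P j) F j) = \sum_(j <- r | P j) mul z (F j).
Proof. exact: (big_morph (mul z) (mulDr z) (mul_0r z)). Qed.

Lemma mul_signl k x z : mul ((-1) ^+ k *: x) z = (-1) ^+ k *: mul x z.
Proof. by rewrite -signr_odd !scaler_sign; case: odd; rewrite ?mul_Nl. Qed.

Lemma mul_signr k x z : mul z ((-1) ^+ k *: x) = (-1) ^+ k *: mul z x.
Proof. by rewrite -signr_odd !scaler_sign; case: odd; rewrite ?mul_Nr. Qed.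

Fixpoint iter_mul (x : M) (xs : seq M) : M :=
  if xs is y :: ys then mul x (iter_mul y ys) else x.

Definition mprod (t : seq M) : M := iter_mul (head 0 t) (behead t).

Lemma mprod_rcons t y : t != [::] -> mprod (rcons t y) = mul (mprod t) y.
Proof.
case: t => [|x t] // _; rewrite /mprod /=.
by elim: t x => [|z t IHt] x //=; rewrite IHt mulA.
Qed.

Variables (T : Type) (v : seq T -> M).

Definition slices (B : seq nat) (s : seq T) : seq (seq T) :=
  [seq drop ab.1 (take ab.2 s) | ab <- zip B (behead B)].

(* a cut after the (j+1)-th letter is recorded as j, as in [cut_bounds] *)
Definition bounds (n : nat) (L : seq nat) : seq nat := 0%N :: rcons (map succn L) n.

Definition cut_prod (s : seq T) (L : seq nat) : M :=
  mprod [seq v q | q <- slices (bounds (size s) L) s].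

Lemma slices_cons2 x y B s :
  slices [:: x, y & B] s = drop x (take y s) :: slices (y :: B) s.
Proof. by []. Qed.

Lemma slices_take k B s : all (geq k) B -> slices B s = slices B (take k s).
Proof.
elim: B => [|x [|y B] IHB] //= /andP[_ /andP[le_yk le_Bk]].
by rewrite !slices_cons2 take_takel // IHB //= le_yk.
Qed.

Lemma slices_rcons b B x y s :
  slices (b :: rcons (rcons B x) y) s = rcons (slices (b :: rcons B x) s) (drop x (take y s)).
Proof. by elim: B b => [|b' B IHB] b //=; rewrite slices_cons2 IHB. Qed.

Lemma slices_shift k B s : slices (map (addn k) B) s = slices B (drop k s).
Proof.
elim: B => [|x [|y B] IHB] //=; rewrite !slices_cons2 -IHB; congr cons.
by rewrite take_drop drop_drop addnC [(y + k)%N]addnC.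
Qed.

Lemma slices_cons_shift k B s :
  slices [:: 0, k & map (addn k) B]%N s = take k s :: slices (0%N :: B) (drop k s).
Proof. by rewrite slices_cons2 drop0 -slices_shift /= addn0. Qed.

Lemma cut_prod_nil s : cut_prod s [::] = v s.
Proof. by rewrite /cut_prod /bounds /= take_size drop0. Qed.

Lemma cut_prod_rcons s L N : all (gtn N) L -> (N.+2 <= size s)%N ->
  cut_prod s (rcons L N) = mul (cut_prod (take N.+1 s) L) (v (drop N.+1 s)).
Proof.
move=> ltL le_s; rewrite /cut_prod /bounds map_rcons slices_rcons take_size map_rcons.
rewrite mprod_rcons; last by rewrite -size_eq0 !size_map size_zip /= size_rcons minnSS.
rewrite size_takel ?(ltnW le_s) //; congr (mul (mprod (map _ _)) _).
apply: slices_take; rewrite /= all_rcons /= leqnn all_map.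
by apply: (sub_all _ ltL) => j /ltnW.
Qed.

Lemma cut_prod_cons s L k : (k.+1 <= size s)%N ->
  cut_prod s (k :: map (addn k.+1) L) = mul (v (take k.+1 s)) (cut_prod (drop k.+1 s) L).
Proof.
move=> le_s; rewrite /cut_prod; have -> : bounds (size s) (k :: map (addn k.+1) L) =
    [:: 0, k.+1 & map (addn k.+1) (rcons (map succn L) (size (drop k.+1 s)))]%N.
  rewrite /bounds size_drop /= map_rcons subnKC // -!map_comp.
  by congr [:: _, _ & rcons _ _]; apply: eq_map => j /=; rewrite addnS.
by rewrite slices_cons_shift; case: L.
Qed.

(* Only cuts at positions >= off are allowed; the offset is what lets
   [alt_cuts_first] peel off the first cut. *)
Definition alt_cuts (N off : nat) (s : seq T) : M :=
  \sum_(c : {set 'I_N}) (-1) ^+ #|c| *: cut_prod s (map (addn off) (vals c)).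

Definition cut_sum (s : seq T) : M := alt_cuts (size s).-1 0 s.

Lemma cut_sumE s :
  cut_sum s = \sum_(c : {set 'I_(size s).-1}) (-1) ^+ #|c| *: cut_prod s (vals c).
Proof. by apply: eq_bigr => c _; rewrite (eq_map add0n) map_id. Qed.

Lemma alt_cuts0 off s : alt_cuts 0 off s = v s.
Proof.
rewrite /alt_cuts (big_pred1 set0) => [|c]; last by apply/esym/eqP/setP => -[].
by rewrite cards0 expr0 scale1r /vals enum_set0 cut_prod_nil.
Qed.

Lemma alt_cuts_last N s : (N.+2 <= size s)%N ->
  alt_cuts N.+1 0 s = alt_cuts N 0 s - mul (alt_cuts N 0 (take N.+1 s)) (v (drop N.+1 s)).
Proof.
move=> le_s; rewrite /alt_cuts (big_set_lift ord_max) big_split /=; congr (_ + _).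
  by apply: eq_bigr => c _; rewrite -!size_vals vals_set_lift_max.
rewrite mul_suml -sumrN; apply: eq_bigr => c _.
rewrite -!size_vals vals_set_lift_max size_rcons exprS mulN1r scaleNr mul_signl.
by rewrite !(eq_map add0n) !map_id cut_prod_rcons ?vals_lt.
Qed.

Lemma alt_cuts_first N off s : (off + N.+2 <= size s)%N ->
  alt_cuts N.+1 off s =
  alt_cuts N off.+1 s - mul (v (take off.+1 s)) (alt_cuts N 0 (drop off.+1 s)).
Proof.
have shiftS L : map (addn off) (map succn L) = map (addn off.+1) L.
  by rewrite -map_comp; apply: eq_map => j /=; rewrite addnS.
move=> le_s; rewrite /alt_cuts (big_set_lift ord0) big_split /=; congr (_ + _).
  by apply: eq_bigr => c _; rewrite -!size_vals vals_set_lift0 size_map shiftS.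
rewrite mul_sumr -sumrN; apply: eq_bigr => c _.
rewrite -!size_vals vals_set_lift0 /= size_map exprS mulN1r scaleNr mul_signr.
rewrite addn0 shiftS cut_prod_cons ?(eq_map add0n) ?map_id //.
by apply: leq_trans le_s; rewrite addnS ltnS leq_addr.
Qed.

Lemma alt_cuts_recl N s : (N.+1 <= size s)%N ->
  alt_cuts N 0 s = v s - \sum_(0%N <= k < N) mul (cut_sum (take k.+1 s)) (v (drop k.+1 s)).
Proof.
elim: N => [|N IHN] le_s; first by rewrite alt_cuts0 big_geq ?subr0.
rewrite alt_cuts_last // IHN ?(ltnW le_s) // big_nat_recr //= opprD addrA.
by rewrite /cut_sum size_takel ?(ltnW le_s).
Qed.

Lemma alt_cuts_recr N off s : (off + N.+1)%N = size s ->
  alt_cuts N off s =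
  v s - \sum_(0%N <= k < N) mul (v (take (off + k).+1 s)) (cut_sum (drop (off + k).+1 s)).
Proof.
elim: N off => [|N IHN] off sz_s; first by rewrite alt_cuts0 big_geq ?subr0.
rewrite alt_cuts_first ?sz_s // IHN; last by rewrite addSnnS.
rewrite [in RHS]big_nat_recl //= addn0.
rewrite opprD addrA addrAC; congr (_ - _ - _).
  by apply: eq_bigr => k _; rewrite addSnnS.
by rewrite /cut_sum size_drop -sz_s addnS subSS addKn.
Qed.

Variable e : M.
Hypotheses (mul1x : left_id e mul) (mulx1 : right_id e mul) (v_nil : v [::] = e).

Definition conv (f g : seq T -> M) (s : seq T) : M :=
  \sum_(0%N <= k < (size s).+1) mul (f (take k s)) (g (drop k s)).

Section TakeuchiAntipode.
Variable sigma : seq T -> M.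
Hypotheses (sigma_nil : sigma [::] = e)
  (sigmaE : forall s, (0 < size s)%N -> sigma s = - cut_sum s).

Lemma conv_sigma_v s : (0 < size s)%N -> conv sigma v s = 0.
Proof.
move=> s_pos; have [n sz_s] : exists n, size s = n.+1 by exists (size s).-1; rewrite prednK.
rewrite /conv sz_s big_nat_recl // big_nat_recr //= take0 drop0 sigma_nil mul1x.
rewrite -sz_s take_size drop_size v_nil mulx1 sigmaE // /cut_sum sz_s /=.
rewrite alt_cuts_recl ?sz_s //; set Y := \sum_(0%N <= k < n) mul (cut_sum _) _.
have -> : \sum_(0%N <= k < n) mul (sigma (take k.+1 s)) (v (drop k.+1 s)) = - Y.
  rewrite -sumrN; apply: eq_big_nat => k /andP[_ lt_kn].
  by rewrite sigmaE ?mul_Nl // size_takel // sz_s ltnW.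
by rewrite addrA subrr.
Qed.

Lemma conv_v_sigma s : (0 < size s)%N -> conv v sigma s = 0.
Proof.
move=> s_pos; have [n sz_s] : exists n, size s = n.+1 by exists (size s).-1; rewrite prednK.
rewrite /conv sz_s big_nat_recl // big_nat_recr //= take0 drop0 v_nil mul1x.
rewrite -sz_s take_size drop_size sigma_nil mulx1 sigmaE // /cut_sum sz_s /=.
rewrite alt_cuts_recr ?sz_s //; set Y := \sum_(0%N <= k < n) mul _ (cut_sum _).
have -> : \sum_(0%N <= k < n) mul (v (take k.+1 s)) (sigma (drop k.+1 s)) = - Y.
  rewrite -sumrN; apply: eq_big_nat => k /andP[_ lt_kn].
  by rewrite add0n sigmaE ?mul_Nr // size_drop sz_s subSS subn_gt0.
by rewrite [- Y + _]addrC addNr.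
Qed.

End TakeuchiAntipode.

End CutProducts.

Section TensorCoalgebra.
Variables (K : fieldType) (I : choiceType).
Local Notation TV := (TV K I).
Local Notation TT := (TT K I).

Lemma mcoeff_tens2 (x y : TV) (a b : seq I) : (tens2 x y)@_(a, b) = x@_a * y@_b.
Proof.
rewrite mcoeff_mlift -sum_mcoeff_indicator big_distrl /=; apply: eq_bigr => a' _.
rewrite mcoeff_mlift -mulrA; congr (_ * _).
have [->|neq_a] := eqVneq a' a.
  rewrite mul1r -sum_mcoeff_indicator; apply: eq_bigr => b' _.
  by rewrite mcoeffU xpair_eqE eqxx.
rewrite /= mulr0n mul0r big1_seq // => b' _.
by rewrite mcoeffU xpair_eqE (negbTE neq_a) /= mulr0n mulr0.
Qed.

Lemma mcoeff_deconcat (w a b : seq I) :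
  (\sum_(k < (size w).+1) (<< (take k w, drop k w) >> : TT))@_(a, b) = (w == a ++ b)%:R.
Proof.
rewrite raddf_sum; under eq_bigr do rewrite /= mcoeffU.
have [->|neq_w] := eqVneq w (a ++ b); last first.
  rewrite mulr0n big1 // => k _; case: eqP => // -[take_w drop_w].
  by move: neq_w; rewrite -(cat_take_drop k w) take_w drop_w eqxx.
have lt_a : (size a < (size (a ++ b)).+1)%N by rewrite size_cat ltnS leq_addr.
rewrite (bigD1 (Ordinal lt_a)) //= take_size_cat // drop_size_cat // eqxx mulr1n.
rewrite big1 ?addr0 // => k neq_k; case: eqP => // -[take_k _].
have := congr1 size take_k; rewrite size_takel ?(ltnSE (ltn_ord k)) // => sz_k.
by move: neq_k; rewrite -val_eqE /= sz_k eqxx.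
Qed.

Lemma mcoeff_coprod (x : TV) (a b : seq I) : (coprod x)@_(a, b) = x@_(a ++ b).
Proof.
rewrite mcoeff_mlift -sum_mcoeff_indicator; apply: eq_bigr => w _.
by rewrite mcoeff_deconcat.
Qed.

(* A nonempty word w in the support of a grouplike u would force w ++ w,
   (w ++ w) ++ (w ++ w), ... into the (finite) support. *)
Lemma grouplike_tone (u : TV) : coprod u = tens2 u u -> counit u = 1 -> u = tone K I.
Proof.
move=> coprod_u counit_u; apply/malgP => w; rewrite mcoeffU.
have [<-|neq_w] := eqVneq [::] w; first by rewrite -counit_u.
apply/eqP; rewrite mcoeff_eq0; apply/negP => w_u.
have dbl_u x : x \in msupp u -> x ++ x \in msupp u.
  by rewrite -!mcoeff_neq0 -mcoeff_coprod coprod_u mcoeff_tens2 => ux; rewrite mulf_neq0.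
pose dbl n := iter n (fun x : seq I => x ++ x) w.
have dbl_supp n : dbl n \in msupp u by elim: n => //= n /dbl_u.
have size_dbl n : size (dbl n) = (2 ^ n * size w)%N.
  by elim: n => [|n IHn]; rewrite ?mul1n //= size_cat IHn addnn -mul2n mulnA -expnS.
pose d := (\max_(x <- msupp u) size x)%N.
have := @leq_bigmax_seq _ _ xpredT size _ (dbl_supp d) isT; rewrite -/d size_dbl.
apply/negP; rewrite -ltnNge (leq_trans (ltn_expl d (ltnSn 1))) // leq_pmulr //.
by rewrite lt0n size_eq0 eq_sym.
Qed.

Lemma vtens_basis (w : seq I) : vtens [seq << i >> | i <- w] = << w >> :> TV.
Proof. by elim: w => //= i w IHw; rewrite -/(vtens _) IHw !mliftU. Qed.

Lemma mlift_coprodU (W : lmodType K) (G : seq I * seq I -> W) (w : seq I) :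
  mlift G (coprod << w >>) = \sum_(0%N <= k < (size w).+1) G (take k w, drop k w).
Proof.
rewrite /coprod mliftU linear_sum big_mkord.
by apply: eq_bigr => k _; apply: mliftU.
Qed.

Lemma counitU (w : seq I) : counit (<< w >> : TV) = (w == [::])%:R.
Proof. by rewrite /counit mcoeffU eq_sym. Qed.

Lemma coprod_basis_expansion (x : TV) :
  coprod x = \sum_(a <- msupp x) x@_a *: coprod << a >>.
Proof. by rewrite {1}/coprod /mlift; apply: eq_bigr => a _; rewrite /coprod mliftU. Qed.

Lemma linear_coprod_eq (W : lmodType K) (G : seq I * seq I -> W) (u : W) :
  (forall w, mlift G (coprod << w >>) = counit (<< w >> : TV) *: u) ->
  forall x, mlift G (coprod x) = counit x *: u.
Proof.
move=> G_basis x; rewrite coprod_basis_expansion linear_sum /counit.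
rewrite -sum_mcoeff_indicator scaler_suml; apply: eq_bigr => a _.
by rewrite linearZ /= G_basis counitU scalerA.
Qed.

End TensorCoalgebra.

Lemma mprod1E (K : fieldType) (I : choiceType) (m : TV K I -> TV K I -> TV K I) x xs :
  mprod1 m x xs = iter_mul m x xs.
Proof. by elim: xs x => //= y xs IHxs x; rewrite IHxs. Qed.

Lemma cutprodE (K : fieldType) (I : choiceType) (m : TV K I -> TV K I -> TV K I)
    (ps : seq (Vsp K I)) (c : {set 'I_(size ps).-1}) :
  cutprod m c = cut_prod m (@vtens K I) ps (vals c).
Proof.
rewrite /cutprod; have -> : pieces c = slices (bounds (size ps) (vals c)) ps.
  by rewrite /pieces /cut_bounds /bounds /vals -map_comp.
by rewrite mprod1E.
Qed.

Section Antipode.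
Variables (K : fieldType) (I : choiceType).
Variables (m : TV K I -> TV K I -> TV K I) (S : TV K I -> TV K I).
Hypotheses (mulA : associative m)
  (mulDl : left_distributive m +%R) (mulDr : right_distributive m +%R)
  (mul1x : left_id (tone K I) m) (mulx1 : right_id (tone K I) m).
Hypothesis S_tone : S (tone K I) = tone K I.
Hypothesis S_vtens : forall ps, (0 < size ps)%N -> S (vtens ps) = - cut_sum m (@vtens K I) ps.

Lemma conv_words (f g : seq (Vsp K I) -> TV K I) (w : seq I) :
  \sum_(0%N <= k < (size w).+1) m (f [seq << i >> | i <- take k w])
                                   (g [seq << i >> | i <- drop k w]) =
  conv m f g [seq << i >> | i <- w].
Proof. by rewrite /conv size_map; apply: eq_big_nat => k _; rewrite map_take map_drop. Qed.

Lemma antipode_words_left (w : seq I) :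
  \sum_(0%N <= k < (size w).+1) m (S << take k w >>) << drop k w >> =
  (w == [::])%:R *: tone K I.
Proof.
under eq_big_nat do rewrite -!vtens_basis.
rewrite (conv_words (fun ps => S (vtens ps))).
case: w => [|i w]; first by rewrite /conv big_nat1 /= S_tone mul1x scale1r.
by rewrite (conv_sigma_v mulA mulDl mul1x mulx1 (erefl _) S_tone S_vtens) ?scale0r.
Qed.

Lemma antipode_words_right (w : seq I) :
  \sum_(0%N <= k < (size w).+1) m << take k w >> (S << drop k w >>) =
  (w == [::])%:R *: tone K I.
Proof.
under eq_big_nat do rewrite -!vtens_basis.
rewrite (conv_words _ (fun ps => S (vtens ps))).
case: w => [|i w]; first by rewrite /conv big_nat1 /= S_tone mul1x scale1r.
by rewrite (conv_v_sigma mulDr mul1x mulx1 (erefl _) S_tone S_vtens) ?scale0r.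
Qed.

End Antipode.

Theorem mainTheorem16 (K : fieldType) (I : choiceType)
  (m : TV K I -> TV K I -> TV K I) (u : TV K I) (S : TV K I -> TV K I) :
  is_bialgebra m u ->
  (forall (a : K) (x y : TV K I), S (a *: x + y) = a *: S x + S y) ->
  S (tone K I) = tone K I ->
  (forall ps : seq (Vsp K I), (0 < size ps)%N ->
     S (vtens ps) =
       - \sum_(c : {set 'I_(size ps).-1}) (-1) ^+ #|c| *: cutprod m c) ->
  is_antipode m u S.
Proof.
move=> [mulZDl [mulZDr [mulA' [mul1 [_ [coprod_u [_ counit_u]]]]]]] _ S_tone S_vtens.
have u_tone : u = tone K I := grouplike_tone coprod_u counit_u.
have mulA : associative m by move=> x y z; rewrite mulA'.
have mulDl : left_distributive m +%R by move=> x y z; have := mulZDl 1 x y z; rewrite !scale1r.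
have mulDr : right_distributive m +%R by move=> x y z; have := mulZDr 1 y z x; rewrite !scale1r.
have mul1x : left_id (tone K I) m by move=> x; rewrite -u_tone; case: (mul1 x).
have mulx1 : right_id (tone K I) m by move=> x; rewrite -u_tone; case: (mul1 x).
have S_cut ps : (0 < size ps)%N -> S (vtens ps) = - cut_sum m (@vtens K I) ps.
  by move=> ps_pos; rewrite S_vtens // cut_sumE; under eq_bigr do rewrite cutprodE.
rewrite u_tone => x; split; move: x; apply: linear_coprod_eq => w.
  rewrite mlift_coprodU counitU.
  exact: (antipode_words_left mulA mulDl mul1x mulx1 S_tone S_cut).
rewrite mlift_coprodU counitU.
exact: (antipode_words_right mulDr mul1x mulx1 S_tone S_cut).
Qed.
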